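(* Consider the procurement setting below with an XOS valuation $v$. The randomized mechanism XOS-Main (described below) is budget feasible and (universally) truthful, and there is an absolute constant $C$ such that for every cost vector $c$ (with $c(i)\le B$ for all $i$), $v(\mathrm{OPT}(c))\le C\cdot \mathbb{E}[\text{value of the winning set of XOS-Main on } c]$, where agents bid truthfully. XOS-Main: with probability $\frac12$ run XOS-Random-Sample; with probability $\frac12$ pick an item $i\in\arg\max_{i\in A}v(\{i\})$ as the only winner and pay it $B$. XOS-Random-Sample (on bids $b$): (1) put each item independently with probability $\frac12$ into a set $T$; (2) compute an optimal solution $\mathrm{OPT}(T)$, i.e. a set maximizing $v(S)$ over $S\subseteq T$ with $b(S)\le B$; (3) set $t=\frac{v(\mathrm{OPT}(T))}{8B}$; (4) find $S^*\in\arg\max_{S\subseteq A\setminus T}\{v(S)-t\cdot b(S)\}$, ties broken by a fixed order; (5) find an additive function $f$ in the XOS representation of $v$ with $f(S^* )=v(S^* )$; (6) run AddM for the additive valuation $f$ on item set $S^*$ with budget $B$; (7) output the result of AddM. Winners are paid their threshold payments.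
   Context: Setting: a buyer with budget $B>0$ and a set $A$ of $n$ agents (items); agent $i$ has a private cost $c(i)\ge 0$ (assumed $\le B$). The valuation $v:2^A\to\mathbb{R}_{\ge0}$ is public, monotone, with $v(\emptyset)=0$; it is XOS: $v(S)=\max\{f_1(S),\dots,f_m(S)\}$ for nonnegative additive functions $f_j$ ($f_j(S)=\sum_{i\in S}f_j(i)$). $\mathrm{OPT}(c)$ is a set maximizing $v(S)$ subject to $c(S)=\sum_{i\in S}c(i)\le B$. A mechanism receives bids $b(i)$, selects winners $S$ and payments $p(i)$, with $p(i)=0$ for $i\notin S$ and $p(i)\ge b(i)$ for $i\in S$; an agent's utility is $p(i)-c(i)$ if it wins and $0$ otherwise. A deterministic mechanism is truthful if bidding $b(i)=c(i)$ is a dominant strategy for every agent; a randomized mechanism is (universally) truthful if it is a probability distribution over deterministic truthful mechanisms. It is budget feasible if $\sum_i p(i)\le B$ always. The threshold payment of a winner under a monotone allocation rule is the supremum of bids with which it would still win. AddM denotes a fixed universally truthful, budget feasible mechanism for additive valuations (from prior work) whose approximation ratio is at most $3$. *)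

From HB Require Import structures.
From mathcomp Require Import all_boot all_order all_algebra.
From mathcomp Require Import classical_sets reals.
Set Implicit Arguments. Unset Strict Implicit. Unset Printing Implicit Defensive.
Import Order.TTheory GRing.Theory Num.Theory.
Local Open Scope ring_scope.
Local Open Scope classical_set_scope.

Section Procurement.
Variables (R : realType) (n : nat).
Local Notation agent := 'I_n.
Local Notation bids := (agent -> R).

Definition mech := bids -> {set agent} * (agent -> R).

Definition setb (b : bids) (i : agent) (x : R) : bids :=
  fun j => if j == i then x else b j.

(* admissible bids: every bid lies in [0, B] (costs, hence bids, are <= B) *)
Definition valid_bids (B : R) (b : bids) := forall i, 0 <= b i <= B.

Definition cost (b : bids) (S : {set agent}) := \sum_(i in S) b i.

Definition utility (o : {set agent} * (agent -> R)) (i : agent) (ci : R) :=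
  if i \in o.1 then o.2 i - ci else 0.

Definition valid_outcomes (B : R) (M : mech) :=
  forall b, valid_bids B b -> forall i,
    (i \notin (M b).1 -> (M b).2 i = 0) /\ (i \in (M b).1 -> b i <= (M b).2 i).

Definition truthful (B : R) (M : mech) :=
  forall (b : bids) (i : agent) (ci : R), valid_bids B b -> 0 <= ci <= B ->
    utility (M b) i ci <= utility (M (setb b i ci)) i ci.

Definition budget_feasible (B : R) (M : mech) :=
  forall b, valid_bids B b -> \sum_(i < n) (M b).2 i <= B.

Definition is_distr (Om : finType) (w : Om -> R) :=
  (forall o, 0 <= w o) /\ \sum_(o : Om) w o = 1.

(* a randomized mechanism (Om, w, M) is universally truthful / budget feasible
   if every deterministic mechanism in its support is *)
Definition univ_truthful (Om : finType) (B : R) (w : Om -> R) (M : Om -> mech) :=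
  is_distr w /\ forall o, 0 < w o -> valid_outcomes B (M o) /\ truthful B (M o).

Definition univ_budget_feasible (Om : finType) (B : R) (w : Om -> R)
  (M : Om -> mech) := forall o, 0 < w o -> budget_feasible B (M o).

Definition expected_value (Om : finType) (w : Om -> R) (M : Om -> mech)
  (val : {set agent} -> R) (c : bids) := \sum_(o : Om) w o * val (M o c).1.

Definition xos_rep (v : {set agent} -> R) (m : nat) (fs : 'I_m -> agent -> R) :=
  (forall j i, 0 <= fs j i) /\
  forall S, v S = \big[Num.max/0]_(j < m) \sum_(i in S) fs j i.

Definition opt_val (v : {set agent} -> R) (U : {set agent}) (b : bids) (B : R) :=
  \big[Num.max/0]_(S : {set agent} | (S \subset U) && (cost b S <= B)) v S.

Definition threshold (B : R) (W : bids -> {set agent}) (b : bids) (i : agent) : R :=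
  sup [set x : R | 0 <= x <= B /\ i \in W (setb b i x)].

Definition restrict (S : {set agent}) (b : bids) : bids :=
  fun i => if i \in S then b i else 0.

(* AddM: seed -> item set -> additive valuation -> budget -> bids -> outcome *)
Definition addm_type (Om : finType) :=
  Om -> {set agent} -> (agent -> R) -> R -> mech.

Definition AddM_spec (Om : finType) (w : Om -> R) (AddM : addm_type Om) :=
  is_distr w /\
  forall (S : {set agent}) (f : agent -> R) (B' : R), 0 < B' ->
    (forall i, 0 <= f i) ->
    [/\ (forall o, 0 < w o -> forall b, valid_bids B' b -> (AddM o S f B' b).1 \subset S),
        univ_truthful B' w (fun o => AddM o S f B'),
        univ_budget_feasible B' w (fun o => AddM o S f B') &
        (forall c : bids, (forall i, 0 <= c i <= B') ->
           opt_val (fun T => \sum_(i in T) f i) S c B'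
             <= 3 * expected_value w (fun o => AddM o S f B')
                                     (fun T => \sum_(i in T) f i) c)].

Section RandomSample.
Variables (Om : finType) (AddM : addm_type Om).
Variables (v : {set agent} -> R) (m : nat) (fs : 'I_m -> agent -> R) (B : R).

Definition rs_t (T : {set agent}) (b : bids) : R := opt_val v T b B / (8 * B).

(* S_star : argmax over S subset of A \ T of v(S) - t b(S), ties broken by the
   fixed enumeration order of {set agent} *)
Definition rs_Sstar (T : {set agent}) (b : bids) : {set agent} :=
  Order.arg_max finset.set0 (fun S => S \subset ~: T) (fun S => v S - rs_t T b * cost b S).

Definition rs_f (S : {set agent}) : agent -> R :=
  oapp fs (fun _ => 0) [pick j | \sum_(i in S) fs j i == v S].

Definition rs_winners (T : {set agent}) (o : Om) (b : bids) : {set agent} :=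
  let S := rs_Sstar T b in (AddM o S (rs_f S) B (restrict S b)).1.

Definition xos_random_sample (T : {set agent}) (o : Om) : mech :=
  fun b => (rs_winners T o b,
            fun i => if i \in rs_winners T o b
                     then threshold B (rs_winners T o) b i else 0).

Definition max_item_set : {set agent} :=
  oapp (fun i => finset.set1 i) finset.set0 [pick i | [forall j, v (finset.set1 j) <= v (finset.set1 i)]].

Definition max_item_mech : mech :=
  fun _ => (max_item_set, fun i => if i \in max_item_set then B else 0).

(* ---------- XOS-Main: seed = (coin, (T, o)) ---------- *)
Definition main_weight (w : Om -> R) (s : bool * ({set agent} * Om)) : R :=
  2^-1 * ((2 ^+ n)^-1 * w s.2.2).

Definition xos_main (s : bool * ({set agent} * Om)) : mech :=
  if s.1 then xos_random_sample s.2.1 s.2.2 else max_item_mech.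

End RandomSample.
End Procurement.

(* Truthfulness: lowering the bid of an agent selected in [S*] keeps [S*]
   unchanged, so the allocation of XOS-Random-Sample inherits monotonicity from
   the truthful AddM and threshold payments make it truthful; each threshold is
   at most the corresponding AddM payment, so budget feasibility is inherited.
   Approximation: let [a] be the XOS clause tight on an optimal set, restricted
   to that set, of total [V = v(OPT)]. If some [a i > V/8], the max-item branch
   alone gives [V/16]. Otherwise, for a sample [T] with [a(T)] in
   [[V/4, 3V/4]], the price [t] derived from [OPT(T)] forces [S*] to contain
   additive value [V/64], of which AddM recovers a third; a second-moment bound
   over the uniform sample shows that the average over all [T] is still at
   least half of this [V/192]. Altogether [C = 768]. *)

From HB Require Import structures.
From mathcomp Require Import all_boot all_order all_algebra.
From mathcomp Require Import boolp reals.
From mathcomp Require classical_sets.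
From mathcomp Require Import ring lra.
Import Order.TTheory GRing.Theory Num.Theory.
Set Implicit Arguments. Unset Strict Implicit. Unset Printing Implicit Defensive.
Local Open Scope ring_scope.

Section Bids.
Variables (R : realType) (n : nat).
Local Notation agent := 'I_n.
Local Notation bids := (agent -> R).
Implicit Types (b c : bids) (i : agent) (B : R) (S G U : {set agent}).

Lemma setb_setb b i x y : setb (setb b i x) i y = setb b i y.
Proof. by apply: funext => j; rewrite /setb; case: (j == i). Qed.

Lemma setb_self b i : setb b i (b i) = b.
Proof. by apply: funext => j; rewrite /setb; case: eqP => // ->. Qed.

Lemma setb_at b i x : setb b i x i = x.
Proof. by rewrite /setb eqxx. Qed.

Lemma valid_setb B b i x : valid_bids B b -> 0 <= x <= B ->
  valid_bids B (setb b i x).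
Proof. by move=> hb hx j; rewrite /setb; case: eqP. Qed.

Lemma cost_setb b i x S :
  cost (setb b i x) S = cost b S + (if i \in S then x - b i else 0).
Proof.
rewrite /cost; case: ifP => iS.
  rewrite !(big_setD1 i iS) /= setb_at (eq_bigr b); first by lra.
  by move=> j; rewrite !inE /setb => /andP[/negbTE -> _].
rewrite addr0; apply: eq_bigr => j jS; rewrite /setb; case: eqP => // ji.
by rewrite -ji jS in iS.
Qed.

Lemma cost_subset b S U : (forall i, 0 <= b i) -> S \subset U ->
  cost b S <= cost b U.
Proof.
move=> b0 sSU; rewrite /cost [X in _ <= X](big_setID S) /= (setIidPr sSU).
by rewrite lerDl; apply: sumr_ge0.
Qed.

Lemma sum_setD (F : agent -> R) S G : G \subset S ->
  \sum_(i in S) F i = \sum_(i in G) F i + \sum_(i in S :\: G) F i.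
Proof. by move=> sGS; rewrite (big_setID G) /= (setIidPr sGS). Qed.

Lemma sum_setC (F : agent -> R) S :
  \sum_(i in ~: S) F i = \sum_i F i - \sum_(i in S) F i.
Proof.
rewrite [\sum_i F i](bigID (mem S)) /= addrC addrK.
by apply: eq_bigl => i; rewrite inE.
Qed.

Lemma restrict_valid B S b : 0 <= B -> valid_bids B b -> valid_bids B (restrict S b).
Proof. by move=> B0 hb i; rewrite /restrict; case: ifP => // _; rewrite lexx. Qed.

Lemma restrict_setb S b i x :
  i \in S -> restrict S (setb b i x) = setb (restrict S b) i x.
Proof.
move=> iS; apply: funext => j; rewrite /restrict /setb.
by case: eqP => [->|_]; rewrite ?iS.
Qed.

Lemma cost_restrict S G b : G \subset S -> cost (restrict S b) G = cost b G.
Proof. by move=> sGS; apply: eq_bigr => i iG; rewrite /restrict (subsetP sGS i iG). Qed.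

Lemma opt_val_restrict (u : {set agent} -> R) S b B :
  opt_val u S (restrict S b) B = opt_val u S b B.
Proof.
apply: eq_bigl => G; case sGS: (G \subset S) => //=.
by rewrite cost_restrict.
Qed.

Lemma cost_half_subset B c S : 0 < B -> (forall i, 0 <= c i <= B) ->
  B / 2 <= cost c S ->
  exists2 G : {set agent}, G \subset S & B / 2 <= cost c G <= B.
Proof.
move=> B0 hc; elim: {S}_.+1 {-2}S (ltnSn #|S|) => // k IH S hk hS.
have [hB|hB] := lerP (cost c S) B; first by exists S; rewrite ?hS.
have [j jS] : exists j, j \in S.
  apply/set0Pn; apply: contraTneq hB => ->.
  by rewrite /cost big_set0 -leNgt ltW.
have [hj|hj] := lerP (B / 2) (c j).
  by exists [set j]; rewrite ?sub1set // /cost big_set1 hj; case/andP: (hc j).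
have [||G sGS hG] := IH (S :\ j).
- by move: hk; rewrite (cardsD1 j S) jS.
- by move: hB; rewrite /cost (big_setD1 j jS) /=; lra.
by exists G => //; apply: subset_trans sGS (subD1set _ _).
Qed.

End Bids.

Section XOS.
Variables (R : realType) (n : nat).
Local Notation agent := 'I_n.
Variables (v : {set agent} -> R) (m : nat) (fs : 'I_m -> agent -> R).
Hypothesis hv : xos_rep v fs.
Implicit Types (S U : {set agent}).

Lemma xos_ge0 S : 0 <= v S.
Proof. by case: hv => _ ->; apply: bigmax_ge_id. Qed.

Lemma xos_ge_clause j S : \sum_(i in S) fs j i <= v S.
Proof. by case: hv => _ ->; apply: le_bigmax. Qed.

Lemma xos_attained S : v S = 0 \/ exists j, v S = \sum_(i in S) fs j i.
Proof.
case: hv => _ ->.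
apply: (big_ind (fun x => x = 0 \/ exists j, x = \sum_(i in S) fs j i)).
- by left.
- by move=> x y hx hy; rewrite /Num.max; case: ifP.
- by move=> j _; right; exists j.
Qed.

Lemma rs_f_ge0 S i : 0 <= rs_f v fs S i.
Proof. by rewrite /rs_f; case: pickP => [j _|_] //=; case: hv. Qed.

Lemma sum_rs_f_self S : \sum_(i in S) rs_f v fs S i = v S.
Proof.
rewrite /rs_f; case: pickP => [j /eqP //|/= h].
rewrite big1 //; case: (xos_attained S) => [-> //|[j hj]].
by move: (h j); rewrite hj eqxx.
Qed.

Lemma sum_rs_f_le S U : \sum_(i in U) rs_f v fs S i <= v U.
Proof.
rewrite /rs_f; case: pickP => [j _|_] /=; first exact: xos_ge_clause.
by rewrite big1 // xos_ge0.
Qed.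

End XOS.

Section OptVal.
Variables (R : realType) (n : nat).
Local Notation agent := 'I_n.
Variable u : {set agent} -> R.
Implicit Types (b : agent -> R) (B x : R) (S U : {set agent}).

Lemma opt_val_ge0 U b B : 0 <= opt_val u U b B.
Proof. exact: bigmax_ge_id. Qed.

Lemma le_opt_val U b B S : S \subset U -> cost b S <= B -> u S <= opt_val u U b B.
Proof. by move=> sSU hS; apply: le_bigmax_cond; rewrite sSU hS. Qed.

Lemma opt_val_le U b B x : 0 <= x ->
  (forall S, S \subset U -> cost b S <= B -> u S <= x) -> opt_val u U b B <= x.
Proof. by move=> x0 h; apply: bigmax_le => // S /andP[]; apply: h. Qed.

Lemma opt_val_attained U b B : opt_val u U b B = 0 \/
  exists S, [/\ S \subset U, cost b S <= B & opt_val u U b B = u S].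
Proof.
apply: (big_ind (fun x => x = 0 \/ exists S,
  [/\ S \subset U, cost b S <= B & x = u S])) => [|x y hx hy|S /andP[h1 h2]].
- by left.
- by rewrite /Num.max; case: ifP.
- by right; exists S.
Qed.

End OptVal.

Lemma pick_subpred (T : finType) (p q : pred T) x :
  pick p = Some x -> {subset q <= p} -> q x -> pick q = Some x.
Proof.
rewrite /pick /enum_mem => + sqp qx; elim: (Finite.enum T) => //= a l IH.
case pa: (a \in p) => /=.
  by case=> ax; subst x; rewrite [a \in q]qx.
by move/IH; case qa: (a \in q) => //; move: (sqp _ qa); rewrite pa.
Qed.

Lemma arg_max_mem_ge (R : realDomainType) (I : finType) (i0 : I) (P : pred I)
    (F : I -> R) :
  P i0 -> P (Order.arg_max i0 P F) /\
          forall j, P j -> F j <= F (Order.arg_max i0 P F).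
Proof. by move=> Pi0; case: (Order.TotalTheory.arg_maxP F Pi0). Qed.

Lemma arg_maxE (R : realDomainType) (I : finType) (i0 : I) (P : pred I) (F : I -> R) :
  P i0 -> pick [pred i | P i & [forall (j | P j), (F j <= F i)%O]]
          = Some (Order.arg_max i0 P F).
Proof.
move=> Pi0; have := arg_max_mem_ge F Pi0.
rewrite /Order.arg_max /extremum; case: pickP => [y _ //|h] /= [Px xmax].
move: (h i0); rewrite /= Px /=; move/negbT/negP; case.
by apply/forallP => j; apply/implyP => /xmax.
Qed.

(* Raising the objective by [d] on a set [Q] containing the argmax keeps the
   argmax: with the same tie-breaking order, the new maximizers are old ones. *)
Lemma arg_max_raise (R : realDomainType) (I : finType) (i0 : I) (P Q : pred I)
    (F G : I -> R) (d : R) :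
  P i0 -> 0 <= d -> (forall i, G i = F i + (if Q i then d else 0)) ->
  Q (Order.arg_max i0 P F) -> Order.arg_max i0 P G = Order.arg_max i0 P F.
Proof.
move=> Pi0 d0 hG.
have [] := arg_max_mem_ge F Pi0.
set x := Order.arg_max i0 P F => Px xmax Qx.
suff: pick [pred i | P i & [forall (j | P j), (G j <= G i)%O]] = Some x.
  by rewrite /Order.arg_max /extremum => ->.
apply: (pick_subpred (arg_maxE F Pi0)).
- move=> y /andP[Py /forallP yG]; apply/andP; split=> //; apply/forallP => z.
  apply/implyP => Pz; have := implyP (yG z) Pz; have := implyP (yG x) Px.
  by rewrite !hG Qx; have := xmax z Pz; case: (Q y); case: (Q z) => /=; lra.
- apply/andP; split=> //; apply/forallP => z; apply/implyP => Pz.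
  by rewrite !hG Qx; have := xmax z Pz; case: (Q z) => /=; lra.
Qed.

Section Sstar.
Variables (R : realType) (n : nat).
Local Notation agent := 'I_n.
Local Notation bids := (agent -> R).
Variables (v : {set agent} -> R) (B : R).
Hypothesis B0 : 0 < B.
Implicit Types (b : bids) (i : agent) (S T : {set agent}).

Lemma rs_SstarP T b :
  rs_Sstar v B T b \subset ~: T /\
  forall S, S \subset ~: T ->
    v S - rs_t v B T b * cost b S
      <= v (rs_Sstar v B T b) - rs_t v B T b * cost b (rs_Sstar v B T b).
Proof. by apply: arg_max_mem_ge; rewrite sub0set. Qed.

Lemma rs_t_ge0 T b : 0 <= rs_t v B T b.
Proof. by rewrite divr_ge0 ?opt_val_ge0 ?mulr_ge0 ?ltW. Qed.

Lemma rs_t_setb T b i x : i \notin T -> rs_t v B T (setb b i x) = rs_t v B T b.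
Proof.
move=> iT; rewrite /rs_t /opt_val; congr (_ / _); apply: eq_bigl => S.
case sST: (S \subset T) => //=; rewrite cost_setb.
by case: ifP => iS; [move: (subsetP sST i iS); rewrite (negbTE iT)|rewrite addr0].
Qed.

(* Lowering a selected agent's bid only makes the sets containing it more
   attractive, so the selected set does not change. *)
Lemma rs_Sstar_lower T b i x : i \in rs_Sstar v B T b -> x <= b i ->
  rs_Sstar v B T (setb b i x) = rs_Sstar v B T b.
Proof.
move=> iS xle; have iT : i \notin T.
  by have [/subsetP h _] := rs_SstarP T b; move: (h i iS); rewrite inE.
rewrite /rs_Sstar (rs_t_setb b x iT).
apply: (@arg_max_raise _ _ _ _ (fun S => i \in S) _ _ (rs_t v B T b * (b i - x))) => //.
- by rewrite sub0set.
- by rewrite mulr_ge0 ?rs_t_ge0 // subr_ge0.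
- by move=> S; rewrite cost_setb; case: ifP => _; lra.
Qed.

Lemma rs_Sstar_setb_eq T b i x y :
  i \in rs_Sstar v B T (setb b i x) -> i \in rs_Sstar v B T (setb b i y) ->
  rs_Sstar v B T (setb b i x) = rs_Sstar v B T (setb b i y).
Proof.
wlog xy : x y / x <= y.
  by move=> h hx hy; case: (lerP x y) => [xy|/ltW yx]; [|symmetry]; apply: h.
move=> _ hy; rewrite -(rs_Sstar_lower (x := x) hy); first by rewrite setb_setb.
by rewrite setb_at.
Qed.

End Sstar.

Section TruthfulMechanism.
Variables (R : realType) (n : nat).
Local Notation agent := 'I_n.
Local Notation bids := (agent -> R).
Variables (B : R) (M : mech R n).
Hypotheses (hvo : valid_outcomes B M) (htr : truthful B M).
Implicit Types (b : bids) (i : agent).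

Lemma truthful_pay_ge b i x : valid_bids B b -> i \in (M b).1 ->
  0 <= x <= B -> i \in (M (setb b i x)).1 -> x <= (M b).2 i.
Proof.
move=> hb ib hx ix.
have := htr i (valid_setb i hb hx) (hb i).
rewrite setb_setb setb_self /utility ib ix.
have [_ h] := hvo (valid_setb i hb hx) i; move: (h ix); rewrite setb_at.
lra.
Qed.

Lemma truthful_mono b i y : valid_bids B b -> i \in (M b).1 ->
  0 <= y <= b i -> i \in (M (setb b i y)).1.
Proof.
move=> hb ib /andP[y0 yb]; apply/negPn/negP => iy.
have yB : 0 <= y <= B by rewrite y0 (le_trans yb) //; case/andP: (hb i).
have := htr i hb yB; rewrite /utility ib (negbTE iy).
have [_ h] := hvo hb i; move: (h ib).
have [ylt|byle] := ltrP y (b i); first lra.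
have ye : y = b i by apply/eqP; rewrite eq_le yb.
by move: iy; rewrite ye setb_self ib.
Qed.

Lemma valid_pay_ge0 b i : valid_bids B b -> 0 <= (M b).2 i.
Proof.
move=> hb; have [h1 h2] := hvo hb i.
case: (boolP (i \in (M b).1)) => ib; last by rewrite h1.
by apply: le_trans (h2 ib); case/andP: (hb i).
Qed.

End TruthfulMechanism.

Section RandomSampleTruthful.
Variables (R : realType) (n : nat).
Local Notation agent := 'I_n.
Local Notation bids := (agent -> R).
Variables (Om : finType) (w : Om -> R) (AddM : addm_type R n Om).
Variables (v : {set agent} -> R) (m : nat) (fs : 'I_m -> agent -> R) (B : R).
Hypotheses (hv : xos_rep v fs) (B0 : 0 < B) (hA : AddM_spec w AddM).
Variables (T : {set agent}) (o : Om).
Hypothesis wo : 0 < w o.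
Implicit Types (b : bids) (i : agent).

Let AM (S : {set agent}) := AddM o S (rs_f v fs S) B.
Let Ss b := rs_Sstar v B T b.
Let W := rs_winners AddM v fs B T o.

Lemma addm_props (S : {set agent}) :
  [/\ forall b, valid_bids B b -> (AM S b).1 \subset S,
      valid_outcomes B (AM S), truthful B (AM S) & budget_feasible B (AM S)].
Proof.
case: hA => _ /(_ S (rs_f v fs S) B B0 (rs_f_ge0 hv S)) [sub [_ tr] bf _].
by have [valid truth] := tr o wo; split=> //; [exact: sub|exact: bf].
Qed.

Lemma valid_restrict_Sstar b : valid_bids B b -> valid_bids B (restrict (Ss b) b).
Proof. by apply: restrict_valid; apply: ltW. Qed.

Lemma rs_winners_sub b : valid_bids B b -> W b \subset Ss b.
Proof.
move=> hb; have [h _ _ _] := addm_props (Ss b).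
exact: h (valid_restrict_Sstar hb).
Qed.

Lemma rs_winners_mono b i y : valid_bids B b -> i \in W b -> 0 <= y <= b i ->
  i \in W (setb b i y).
Proof.
move=> hb iW /andP[y0 yb]; have iS := subsetP (rs_winners_sub hb) i iW.
rewrite /W /rs_winners -/(Ss _) /Ss (rs_Sstar_lower B0 iS yb) restrict_setb //.
have [_ hvo htr _] := addm_props (Ss b).
apply: (truthful_mono hvo htr (valid_restrict_Sstar hb) iW).
by rewrite /restrict -/(Ss b) iS y0.
Qed.

Lemma rs_winners_pay_ge b i x : valid_bids B b -> i \in W b -> 0 <= x <= B ->
  i \in W (setb b i x) -> x <= (AM (Ss b) (restrict (Ss b) b)).2 i.
Proof.
move=> hb iW hx ix; have iS := subsetP (rs_winners_sub hb) i iW.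
have ixS := subsetP (rs_winners_sub (valid_setb i hb hx)) i ix.
have eS : Ss (setb b i x) = Ss b.
  by rewrite /Ss (rs_Sstar_setb_eq B0 (y := b i)) ?setb_self.
move: ix; rewrite /W /rs_winners -/(Ss _) eS restrict_setb // => ix.
have [_ hvo htr _] := addm_props (Ss b).
exact: truthful_pay_ge (valid_restrict_Sstar hb) iW hx ix.
Qed.

Lemma threshold_ge b i x : valid_bids B b -> 0 <= x <= B ->
  i \in W (setb b i x) -> x <= threshold B W b i.
Proof.
move=> hb hx ix; apply: ub_le_sup; last by split.
by exists B => y [/andP[_ ->]].
Qed.

Lemma threshold_le_pay b i : valid_bids B b -> i \in W b ->
  threshold B W b i <= (AM (Ss b) (restrict (Ss b) b)).2 i.
Proof.
move=> hb iW; apply: ge_sup; first by exists (b i); split; rewrite ?setb_self.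
by move=> y [hy iy]; apply: rs_winners_pay_ge.
Qed.

Lemma threshold_gt_win b i ci : valid_bids B b -> i \in W b -> 0 <= ci ->
  ci < threshold B W b i -> i \in W (setb b i ci).
Proof.
move=> hb iW c0 /sup_gt [|x [hx ix] cx].
  by exists (b i); split; rewrite ?setb_self.
have := rs_winners_mono (y := ci) (valid_setb i hb hx) ix.
by rewrite setb_setb setb_at c0 ltW //; apply.
Qed.

Lemma threshold_setb b i c : threshold B W (setb b i c) i = threshold B W b i.
Proof.
rewrite /threshold /classical_sets.mkset; congr sup.
by apply: funext => x; rewrite setb_setb.
Qed.

Lemma xos_random_sample_valid : valid_outcomes B (xos_random_sample AddM v fs B T o).
Proof.
move=> b hb i /=; split => [/negbTE -> //|iW]; rewrite iW.
by apply: threshold_ge; rewrite ?setb_self.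
Qed.

(* Threshold payments do not depend on the agent's own bid, and the allocation
   is monotone: the agent wins exactly below its threshold. *)
Lemma xos_random_sample_truthful : truthful B (xos_random_sample AddM v fs B T o).
Proof.
move=> b i ci hb hc; rewrite /utility /= -/W threshold_setb.
case: (boolP (i \in W b)) => iW; case: (boolP (i \in W (setb b i ci))) => ic //.
- have [|h] := lerP (threshold B W b i) ci; first lra.
  by move: ic; rewrite (threshold_gt_win hb iW _ h) //; case/andP: hc.
- by rewrite subr_ge0; apply: threshold_ge.
Qed.

Lemma xos_random_sample_budget_feasible :
  budget_feasible B (xos_random_sample AddM v fs B T o).
Proof.
move=> b hb /=; rewrite -/W; have [_ hvo _ hbf] := addm_props (Ss b).
apply: le_trans (hbf _ (valid_restrict_Sstar hb)); apply: ler_sum => i _.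
case: ifP => iW; first exact: threshold_le_pay.
exact: (valid_pay_ge0 hvo i (valid_restrict_Sstar hb)).
Qed.

End RandomSampleTruthful.

Section MaxItem.
Variables (R : realType) (n : nat) (v : {set 'I_n} -> R) (B : R).

Lemma max_item_budget_feasible : 0 <= B -> budget_feasible B (max_item_mech v B).
Proof.
move=> B0 b _ /=; rewrite -big_mkcond /max_item_set.
by case: pickP => [i _|_] /=; rewrite ?big_set1 ?big_set0.
Qed.

Lemma max_item_valid : valid_outcomes B (max_item_mech v B).
Proof. by move=> b hb i /=; split=> [/negbTE -> //|->]; case/andP: (hb i). Qed.

Lemma max_item_truthful : truthful B (max_item_mech v B).
Proof. by []. Qed.

Lemma max_item_set_max (i : 'I_n) : v [set i] <= v (max_item_set v).
Proof.
rewrite /max_item_set; case: pickP => [j /forallP h|h] /=; first exact: h.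
have [_ hk] := arg_max_mem_ge (fun k => v [set k]) (isT : xpredT i).
move: (h (Order.arg_max i xpredT (fun k => v [set k]))) => /negbT/negP; case.
by apply/forallP => j; apply: hk.
Qed.

End MaxItem.

Section SecondMoment.
Variables (R : realType) (I : finType).
Implicit Types (T : {set I}) (a : I -> R).

Lemma card_sets : #|{set I}| = (2 ^ #|I|)%N.
Proof. by rewrite -[LHS]cardsT -powersetT card_powerset cardsT. Qed.

Lemma sum_sets_const (x : R) : \sum_(T : {set I}) x = 2 ^+ #|I| * x.
Proof. by rewrite sumr_const card_sets -[LHS]mulr_natl natrX. Qed.

Definition sign_in T i : R := if i \in T then 1 else -1.

Definition toggle (j : I) T := if j \in T then T :\ j else j |: T.

Lemma in_toggle j T i : (i \in toggle j T) = (if i == j then j \notin T else i \in T).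
Proof.
rewrite /toggle; case: (boolP (j \in T)) => jT; rewrite !inE;
  case: eqP => [->|] //=; by rewrite ?jT.
Qed.

Lemma toggleK j : involutive (toggle j).
Proof.
move=> T; apply/setP => i; rewrite !in_toggle; case: eqP => [->|//].
by rewrite eqxx negbK.
Qed.

(* For [i != j], toggling [j] is a sign-reversing involution of the summand. *)
Lemma sum_sign_in (i j : I) :
  \sum_(T : {set I}) sign_in T i * sign_in T j = if i == j then 2 ^+ #|I| else 0.
Proof.
case: eqP => [<-|/eqP ij].
  rewrite (eq_bigr (fun _ => 1)) ?sum_sets_const ?mulr1 // => T _.
  by rewrite /sign_in; case: ifP; rewrite ?mulr1 ?mulrNN ?mulr1.
set s := \sum_(T : {set I}) _; suff : s = - s by lra.
rewrite /s {1}(reindex_inj (can_inj (toggleK j))) /= -sumrN.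
apply: eq_bigr => T _; rewrite /sign_in !in_toggle eqxx (negbTE ij).
by case: (j \in T); case: (i \in T) => /=; lra.
Qed.

Lemma sum_sqr_dev a :
  \sum_(T : {set I}) (\sum_(i in T) a i - (\sum_i a i) / 2) ^+ 2
    = 2 ^+ #|I| / 4 * \sum_i a i ^+ 2.
Proof.
have dev (T : {set I}) : \sum_(i in T) a i - (\sum_i a i) / 2 = \sum_i a i * sign_in T i / 2.
  rewrite big_mkcond /= mulr_suml -sumrB; apply: eq_bigr => i _.
  by rewrite /sign_in; case: ifP => _; lra.
under eq_bigr => T _ do rewrite dev expr2 mulr_suml.
under eq_bigr => T _ do under eq_bigr => i _ do rewrite mulr_sumr.
rewrite exchange_big /=; under eq_bigr => i _ do rewrite exchange_big /=.
rewrite mulr_sumr; apply: eq_bigr => i _.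
have cross (j : I) : \sum_(T : {set I}) a i * sign_in T i / 2 * (a j * sign_in T j / 2)
    = a i * a j / 4 * (if i == j then 2 ^+ #|I| else 0).
  rewrite -sum_sign_in mulr_sumr; apply: eq_bigr => T _; lra.
rewrite (bigD1 i) //= [X in _ + X]big1 => [|j ji]; last first.
  by rewrite cross eq_sym (negbTE ji) mulr0.
by rewrite cross eqxx; lra.
Qed.

(* Chebyshev over the uniform random subset: [a(T)] concentrates around half
   the total when no single weight is large. *)
Lemma sum_ge_balanced a (g : {set I} -> R) (V x : R) :
  \sum_i a i = V -> 0 < V -> (forall i, 0 <= a i <= V / 8) -> 0 <= x ->
  (forall T, 0 <= g T) ->
  (forall T, V / 4 <= \sum_(i in T) a i <= 3 * V / 4 -> x <= g T) ->
  2 ^+ #|I| * (x / 2) <= \sum_(T : {set I}) g T.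
Proof.
move=> hV V0 ha x0 g0 hg.
(* [k] makes the quadratic penalty reach [x] at the edge of the window. *)
set k := 16 * x / V ^+ 2.
have k0 : 0 <= k by rewrite /k divr_ge0 ?sqr_ge0 // mulr_ge0.
have kV : k * (V ^+ 2 / 16) = x by rewrite /k; field; rewrite gt_eqF.
have lower (T : {set I}) : x - k * (\sum_(i in T) a i - V / 2) ^+ 2 <= g T.
  have sq0 : 0 <= k * (\sum_(i in T) a i - V / 2) ^+ 2 by rewrite mulr_ge0 ?sqr_ge0.
  have [/hg|unbal] := boolP (V / 4 <= \sum_(i in T) a i <= 3 * V / 4); first lra.
  have : V ^+ 2 / 16 <= (\sum_(i in T) a i - V / 2) ^+ 2.
    by move: unbal; rewrite negb_and -!ltNge => /orP[] ?; nra.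
  by move/(ler_wpM2l k0); have := g0 T; lra.
have sq : \sum_i a i ^+ 2 <= V / 8 * V.
  rewrite -[X in _ * X]hV mulr_sumr; apply: ler_sum => i _; rewrite expr2.
  by have /andP[? ?] := ha i; apply: ler_wpM2r.
have : \sum_(T : {set I}) (x - k * (\sum_(i in T) a i - V / 2) ^+ 2)
    <= \sum_(T : {set I}) g T by apply: ler_sum => T _; apply: lower.
rewrite sumrB sum_sets_const -mulr_sumr -hV sum_sqr_dev.
have P0 : 0 <= 2 ^+ #|I| / 4 :> R by rewrite divr_ge0 ?exprn_ge0.
have := ler_wpM2l k0 (ler_wpM2l P0 sq).
have -> : k * (2 ^+ #|I| / 4 * (V / 8 * V)) = 2 ^+ #|I| * (x / 2).
  by rewrite /k; field; rewrite gt_eqF.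
lra.
Qed.

End SecondMoment.

Section MainSeed.
Variables (R : realType) (n : nat) (Om : finType) (w : Om -> R).
Local Notation seed := (bool * ({set 'I_n} * Om))%type.

Lemma sum_seed (F : seed -> R) :
  \sum_s F s = \sum_(b : bool) \sum_(T : {set 'I_n}) \sum_(o : Om) F (b, (T, o)).
Proof.
rewrite (eq_bigr (fun s => F (s.1, (s.2.1, s.2.2)))); last by move=> [? [? ?]].
rewrite -(pair_bigA _ (fun b q => F (b, (q.1, q.2)))); apply: eq_bigr => b _.
by rewrite -(pair_bigA _ (fun T o => F (b, (T, o)))).
Qed.

Lemma main_weight_gt0 (s : seed) : 0 < main_weight w s -> 0 < w s.2.2.
Proof. by rewrite /main_weight !pmulr_rgt0 // ?invr_gt0 ?exprn_gt0. Qed.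

Lemma main_weight_distr : is_distr w -> is_distr (main_weight (n := n) w).
Proof.
move=> [w0 w1]; split=> [s|].
  by rewrite /main_weight !mulr_ge0 // ?invr_ge0 ?exprn_ge0.
have half (b : bool) : \sum_(T : {set 'I_n}) \sum_o main_weight w (b, (T, o)) = 2^-1.
  rewrite (eq_bigr (fun _ => 2^-1 * (2 ^+ n)^-1)); last first.
    by move=> T _; rewrite /main_weight /= -!mulr_sumr w1 mulr1.
  by rewrite sum_sets_const card_ord mulrCA divff ?mulr1 // expf_neq0 // pnatr_eq0.
by rewrite sum_seed big_bool /= !half; field.
Qed.

End MainSeed.

Section AdditiveOpt.
Variables (R : realType) (n : nat).
Local Notation agent := 'I_n.
Variables (v : {set agent} -> R) (f c : agent -> R) (B t : R).
Hypotheses (B0 : 0 < B) (hc : forall i, 0 <= c i <= B) (t0 : 0 <= t).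

(* If [S] is too expensive, cut out a subset [G] of cost in [[B/2, B]]: local
   optimality of [S] forces [f G >= t * cost c G]. *)
Lemma opt_additive_ge (S : {set agent}) (x : R) :
  \sum_(i in S) f i = v S ->
  (forall U : {set agent}, U \subset S -> \sum_(i in U) f i <= v U) ->
  (forall U : {set agent}, U \subset S -> v U - t * cost c U <= v S - t * cost c S) ->
  x <= v S - t * cost c S -> x <= t * B / 2 ->
  x <= opt_val (fun U => \sum_(i in U) f i) S c B.
Proof.
move=> fS fle Sopt hx1 hx2.
have c0 i : 0 <= c i by case/andP: (hc i).
have [cS|cS] := lerP (cost c S) B.
  apply: le_trans (le_opt_val _ (subxx S) cS); rewrite fS.
  have : 0 <= t * cost c S by rewrite mulr_ge0 ?sumr_ge0.
  lra.
have [|G sGS /andP[cG1 cG2]] := cost_half_subset (S := S) B0 hc.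
  by rewrite (le_trans _ (ltW cS)) // ler_pdivrMr // ler_peMr ?ler1n // ltW.
apply: le_trans (le_opt_val _ sGS cG2).
have := Sopt _ (subsetDl S G); have := fle _ (subsetDl S G).
rewrite (sum_setD f sGS) in fS; rewrite /cost (sum_setD c sGS) -/(cost c _) -/(cost c _).
have : t * (B / 2) <= t * cost c G by rewrite ler_wpM2l.
lra.
Qed.

End AdditiveOpt.

Section BalancedSample.
Variables (R : realType) (n : nat).
Local Notation agent := 'I_n.
Variables (Om : finType) (w : Om -> R) (AddM : addm_type R n Om).
Variables (v : {set agent} -> R) (m : nat) (fs : 'I_m -> agent -> R) (B : R).
Hypotheses (hv : xos_rep v fs) (B0 : 0 < B) (hA : AddM_spec w AddM).
Variable c : agent -> R.
Hypothesis hc : forall i, 0 <= c i <= B.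
Variable a : agent -> R.
Hypothesis ha_cover : forall U : {set agent}, exists U' : {set agent},
  [/\ U' \subset U, cost c U' <= B & \sum_(i in U) a i <= v U'].
Hypothesis ha_opt : \sum_i a i = opt_val v [set: agent] c B.

(* [V/4 <= OPT(T) <= V] pins [t * B] between [V/32] and [V/8]; since [~: T]
   still holds a set of cost at most [B] and value [V/4], [S*] has surplus at
   least [V/8]. *)
Lemma balanced_sample_value (T : {set agent}) :
  (\sum_i a i) / 4 <= \sum_(i in T) a i <= 3 * (\sum_i a i) / 4 ->
  (\sum_i a i) / 192 <= \sum_o w o * v (rs_winners AddM v fs B T o c).
Proof.
set V := \sum_i a i; set X := \sum_(i in T) a i => /andP[hX1 hX2].
set S := rs_Sstar v B T c; set f := rs_f v fs S; set t := rs_t v B T c.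
set VT := opt_val v T c B.
have XVT : X <= VT.
  by have [U' [sU' cU' aU']] := ha_cover T; apply: le_trans aU' (le_opt_val _ sU' cU').
have VTV : VT <= V.
  rewrite /V ha_opt; apply: opt_val_le => [|U _ cU]; first exact: opt_val_ge0.
  exact: le_opt_val (subsetT U) cU.
have tB : t * B = VT / 8 by rewrite /t /rs_t -/VT; field; rewrite gt_eqF.
have t0 : 0 <= t := rs_t_ge0 v B0 T c.
have [sSTc Sopt] := rs_SstarP v B T c; rewrite -/S -/t in Sopt.
have gain : V / 8 <= v S - t * cost c S.
  have [U' [sU' cU' aU']] := ha_cover (~: T); rewrite sum_setC -/V -/X in aU'.
  have := Sopt U' sU'; have : t * cost c U' <= t * B by rewrite ler_wpM2l.
  lra.
have opt_f : V / 64 <= opt_val (fun U => \sum_(i in U) f i) S (restrict S c) B.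
  rewrite opt_val_restrict; apply: (opt_additive_ge B0 hc t0).
  - exact: sum_rs_f_self.
  - by move=> U _; apply: sum_rs_f_le.
  - by move=> U sUS; apply: Sopt; apply: subset_trans sUS sSTc.
  - lra.
  - by rewrite tB; lra.
have [[w0 _] /(_ S f B B0 (rs_f_ge0 hv S)) [_ _ _ approx]] := hA.
have := approx (restrict S c) (restrict_valid S (ltW B0) hc).
rewrite /expected_value => hE.
have : \sum_o w o * \sum_(i in (AddM o S f B (restrict S c)).1) f i
       <= \sum_o w o * v (rs_winners AddM v fs B T o c).
  by apply: ler_sum => o _; apply: ler_wpM2l => //; exact: sum_rs_f_le.
lra.
Qed.

End BalancedSample.

Section Approximation.
Variables (R : realType) (n : nat).
Local Notation agent := 'I_n.
Variables (Om : finType) (w : Om -> R) (AddM : addm_type R n Om).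
Variables (v : {set agent} -> R) (m : nat) (fs : 'I_m -> agent -> R) (B : R).
Hypotheses (hv : xos_rep v fs) (B0 : 0 < B) (hA : AddM_spec w AddM).
Variable c : agent -> R.
Hypothesis hc : forall i, 0 <= c i <= B.

(* The clause of the XOS representation that is tight on an optimal set,
   restricted to that set. *)
Lemma opt_val_additive_witness : exists a : agent -> R,
  [/\ forall i, 0 <= a i, \sum_i a i = opt_val v [set: agent] c B,
      forall i, a i <= v [set i] &
      forall U : {set agent}, exists U' : {set agent},
        [/\ U' \subset U, cost c U' <= B & \sum_(i in U) a i <= v U']].
Proof.
have c0 i : 0 <= c i by case/andP: (hc i).
have zero : opt_val v [set: agent] c B = 0 -> exists a : agent -> R,
  [/\ forall i, 0 <= a i, \sum_i a i = opt_val v [set: agent] c B,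
      forall i, a i <= v [set i] &
      forall U : {set agent}, exists U' : {set agent},
        [/\ U' \subset U, cost c U' <= B & \sum_(i in U) a i <= v U']].
  move=> opt0; exists (fun _ => 0); split=> [i||i|U]; rewrite ?big1 ?(xos_ge0 hv) //.
  by exists set0; rewrite sub0set /cost big_set0 (xos_ge0 hv) ltW.
have [/zero //|[O [_ cO opt]]] := opt_val_attained v [set: agent] c B.
have [vO0|[j vO]] := xos_attained hv O; first by apply: zero; rewrite opt.
exists (fun i => if i \in O then fs j i else 0); split=> [i||i|U].
- by case: ifP => // _; case: hv.
- by rewrite opt vO [RHS]big_mkcond.
- case: ifP => _; last by move: (xos_ge0 hv [set i]).
  by have := xos_ge_clause hv j [set i]; rewrite big_set1.
- exists (U :&: O); split; first exact: subsetIl.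
    exact: le_trans (cost_subset c0 (subsetIr U O)) cO.
  rewrite (big_setID O) /= [X in _ + X]big1 => [|i]; last first.
    by rewrite !inE => /andP[/negbTE ->].
  rewrite addr0 (eq_bigr (fs j)) ?xos_ge_clause // => i.
  by rewrite !inE => /andP[_ ->].
Qed.

Lemma expected_value_xos_main :
  expected_value (main_weight w) (xos_main AddM v fs B) v c
  = 2^-1 * ((2 ^+ n)^-1 * \sum_(T : {set agent})
                \sum_o w o * v (rs_winners AddM v fs B T o c))
    + 2^-1 * v (max_item_set v).
Proof.
have [[_ w1] _] := hA.
rewrite /expected_value sum_seed big_bool /=; congr (_ + _).
  rewrite !mulr_sumr; apply: eq_bigr => T _; rewrite !mulr_sumr.
  by apply: eq_bigr => o _; rewrite /main_weight /=; ring.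
set K := 2^-1 * (2 ^+ n)^-1 * v (max_item_set v).
rewrite (eq_bigr (fun=> K)) => [|T _]; last first.
  rewrite (eq_bigr (fun o => K * w o)) => [|o _]; first by rewrite -mulr_sumr w1 mulr1.
  by rewrite /main_weight /K /=; ring.
rewrite sum_sets_const card_ord /K; field.
by rewrite expf_neq0 // pnatr_eq0.
Qed.

Lemma xos_main_approx :
  opt_val v [set: agent] c B
    <= 768%:R * expected_value (main_weight w) (xos_main AddM v fs B) v c.
Proof.
have [[w0 _] _] := hA.
have [a [a0 aV a_single a_cover]] := opt_val_additive_witness.
set g := fun T : {set agent} => \sum_o w o * v (rs_winners AddM v fs B T o c).
have g0 T : 0 <= g T by apply: sumr_ge0 => o _; rewrite mulr_ge0 ?(xos_ge0 hv).
have maxv : 0 <= v (max_item_set v) := xos_ge0 hv _.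
have P0 : 0 < 2 ^+ n :> R by rewrite exprn_gt0.
rewrite expected_value_xos_main -aV -/g; set V := \sum_i a i.
have sumg0 : 0 <= (2 ^+ n)^-1 * \sum_T g T by rewrite mulr_ge0 ?sumr_ge0 ?invr_ge0 ?ltW.
have [V0|V0] := eqVneq V 0; first by rewrite V0; lra.
have {}V0 : 0 < V by rewrite lt_def V0 sumr_ge0.
have [/existsP[i ai]|/existsPn small] := boolP [exists i, V / 8 < a i].
  have := max_item_set_max v i; have := a_single i; lra.
have sum_g : 2 ^+ n * (V / 192 / 2) <= \sum_T g T.
  rewrite -[X in 2 ^+ X]card_ord.
  apply: (sum_ge_balanced (a := a)) => // [i||T].
  - by rewrite a0 /= leNgt small.
  - by rewrite divr_ge0 ?ltW.
  - exact: (balanced_sample_value hv B0 hA hc a_cover aV).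
have : V / 384 <= (2 ^+ n)^-1 * \sum_T g T.
  by rewrite ler_pdivlMl // mulrC; lra.
lra.
Qed.

End Approximation.

Section MainMechanism.
Variables (R : realType) (n : nat).
Variables (Om : finType) (w : Om -> R) (AddM : addm_type R n Om).
Variables (v : {set 'I_n} -> R) (m : nat) (fs : 'I_m -> 'I_n -> R) (B : R).
Hypotheses (hv : xos_rep v fs) (B0 : 0 < B) (hA : AddM_spec w AddM).

Lemma xos_main_budget_feasible :
  univ_budget_feasible B (main_weight w) (xos_main AddM v fs B).
Proof.
move=> [[] [T o]] /main_weight_gt0 /= wo.
  exact: xos_random_sample_budget_feasible hv B0 hA T o wo.
exact: max_item_budget_feasible (ltW B0).
Qed.

Lemma xos_main_univ_truthful :
  univ_truthful B (main_weight w) (xos_main AddM v fs B).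
Proof.
split; first by case: hA => /main_weight_distr.
move=> [[] [T o]] /main_weight_gt0 /= wo; split.
- exact: xos_random_sample_valid.
- exact: xos_random_sample_truthful hv B0 hA T o wo.
- exact: max_item_valid.
- exact: max_item_truthful.
Qed.

End MainMechanism.

Theorem theorem3p1 :
  exists C : nat, forall (R : realType) (n : nat) (B : R)
    (v : {set 'I_n} -> R) (m : nat) (fs : 'I_m -> 'I_n -> R)
    (Om : finType) (w : Om -> R) (AddM : addm_type R n Om),
    0 < B -> xos_rep v fs -> AddM_spec w AddM ->
    [/\ univ_budget_feasible B (main_weight w) (xos_main AddM v fs B),
        univ_truthful B (main_weight w) (xos_main AddM v fs B) &
        forall c : 'I_n -> R, (forall i, 0 <= c i <= B) ->
          opt_val v [set: 'I_n]%SET c B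
            <= C%:R * expected_value (main_weight w) (xos_main AddM v fs B) v c].
Proof.
exists 768%N => R n B v m fs Om w AddM B0 hv hA; split.
- exact: xos_main_budget_feasible.
- exact: xos_main_univ_truthful.
- by move=> c hc; apply: xos_main_approx.
Qed.
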